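(* Let $X$ be a regular topological space and let $\mathcal A\subseteq\mathcal P(X)$. Put $\overline{\mathcal A}=\{\overline{A}:A\in\mathcal A\}$ (closures in $X$). Then $X$ is $\mathcal A$-selectively pseudocompact if and only if $X$ is $\overline{\mathcal A}$-selectively pseudocompact.
   Context: For a topological space $X$ and $\mathcal A\subseteq\mathcal P(X)$, $X$ is called $\mathcal A$-selectively pseudocompact if for every sequence $\langle U_n:n\in\omega\rangle$ of pairwise disjoint non-empty open subsets of $X$ one can choose sets $A_n\in\mathcal A$ with $A_n\subseteq U_n$ such that the family $\{A_n:n\in\omega\}$ has an accumulation point, i.e. it is not locally finite: there is a point $x\in X$ every neighbourhood of which meets $A_n$ for infinitely many $n$. *)

From HB Require Import structures.
From mathcomp Require Import all_boot all_order all_algebra.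
From mathcomp Require Import all_classical all_reals all_analysis.
Set Implicit Arguments. Unset Strict Implicit. Unset Printing Implicit Defensive.
Local Open Scope classical_set_scope.

Definition sel_pseudocompact (T : topologicalType) (A : set (set T)) : Prop :=
  forall U : nat -> set T,
    (forall n, open (U n)) ->
    (forall n, U n !=set0) ->
    (forall n m, n <> m -> U n `&` U m = set0) ->
    exists An : nat -> set T,
      (forall n, A (An n) /\ An n `<=` U n) /\
      exists x : T, forall V : set T, nbhs x V ->
        infinite_set [set n : nat | An n `&` V !=set0].

From HB Require Import structures.
From mathcomp Require Import all_boot all_order all_algebra.
From mathcomp Require Import all_classical all_reals all_analysis.
Local Open Scope classical_set_scope.

(* Since an open set meets closure B exactly when it meets B, a point is an
   accumulation point of (A_n) iff it is one of (closure A_n); so closures can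
   always be replaced by the sets themselves.  Conversely, regularity lets us
   shrink each U_n to a non-empty open W_n with closure W_n inside U_n: sets
   A_n chosen inside W_n then have their closures inside U_n. *)

Section AccumulationPoint.
Context {T : topologicalType}.

Definition accumulation_point (F : nat -> set T) (x : T) : Prop :=
  forall V : set T, nbhs x V -> infinite_set [set n | F n `&` V !=set0].

Lemma closure_meets_open (B V : set T) :
  open V -> closure B `&` V !=set0 -> B `&` V !=set0.
Proof.
move=> oV [y [clBy Vy]].
have [z [Bz Vz]] := clBy V (open_nbhs_nbhs (conj oV Vy)).
by exists z.
Qed.

Lemma accumulation_pointS (F G : nat -> set T) (x : T) :
  (forall n, F n `<=` G n) -> accumulation_point F x -> accumulation_point G x.
Proof.
move=> FG accF V xV; apply: sub_infinite_set (accF V xV) => n [y [Fy Vy]].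
by exists y; split=> //; apply: FG.
Qed.

Lemma accumulation_point_closure (F : nat -> set T) (x : T) :
  accumulation_point (fun n => closure (F n)) x -> accumulation_point F x.
Proof.
move=> accF V xV; apply: sub_infinite_set (accF _ (nbhs_interior xV)) => n.
move=> /(closure_meets_open _ _ (open_interior V)) [y [Fy Vy]].
by exists y; split=> //; apply: interior_subset.
Qed.

End AccumulationPoint.

Lemma regular_shrink_open (T : topologicalType) (U : set T) :
  regular_space T -> open U -> U !=set0 ->
  exists W : set T, [/\ open W, W !=set0 & closure W `<=` U].
Proof.
move=> reg oU [a Ua].
have [V aV clVU] := reg a U (open_nbhs_nbhs (conj oU Ua)).
exists V°; split; first exact: open_interior.
  by exists a; apply: nbhs_singleton; apply: nbhs_interior.
exact: subset_trans (closureS (@interior_subset _ V)) clVU.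
Qed.

Section SelectivePseudocompactness.
Context {T : topologicalType} (A : set (set T)).

Lemma sel_pseudocompact_of_closure :
  sel_pseudocompact [set closure B | B in A] -> sel_pseudocompact A.
Proof.
move=> hA U oU neU dU; have [C [HC [x accC]]] := hA U oU neU dU.
have /choice[B HB] : forall n, exists B, A B /\ closure B = C n.
  by move=> n; have [[B AB <-] _] := HC n; exists B.
exists B; split.
  move=> n; have [AB clBC] := HB n; split=> //.
  by apply: subset_trans (proj2 (HC n)); rewrite -clBC; apply: subset_closure.
exists x; apply: accumulation_point_closure.
by under eq_fun => n do rewrite (proj2 (HB n)).
Qed.

Lemma sel_pseudocompact_closure :
  regular_space T -> sel_pseudocompact A -> sel_pseudocompact [set closure B | B in A].
Proof.
move=> reg hA U oU neU dU.
have /choice[W HW] : forall n, exists W : set T,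
    [/\ open W, W !=set0 & closure W `<=` U n].
  by move=> n; apply: regular_shrink_open.
have oW n : open (W n) by have [] := HW n.
have neW n : W n !=set0 by have [] := HW n.
have clWU n : closure (W n) `<=` U n by have [] := HW n.
have WU n : W n `<=` U n by move=> y /subset_closure /clWU.
have dW n m : n <> m -> W n `&` W m = set0.
  by move=> nm; apply: subsetI_eq0 (dU n m nm); apply: WU.
have [B [HB [x accB]]] := hA W oW neW dW.
exists (fun n => closure (B n)); split.
  move=> n; have [AB BW] := HB n; split; first by exists (B n).
  exact: subset_trans (closureS BW) (clWU n).
by exists x; apply: accumulation_pointS accB => n; apply: subset_closure.
Qed.

End SelectivePseudocompactness.

Theorem lemma1p3 (T : topologicalType) (A : set (set T)) :
  @regular_space T ->
  (sel_pseudocompact A <-> sel_pseudocompact [set closure B | B in A]).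
Proof.
move=> reg; split; first exact: sel_pseudocompact_closure.
exact: sel_pseudocompact_of_closure.
Qed.
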